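(* In an operational probabilistic theory with finite-dimensional transformation spaces and convex, closed sets of transformations, if $\chi$ is the unique invariant state of system $\mathrm{A}$, then $\chi$ is internal: for every $\omega\in\mathsf{St}_1(\mathrm{A})$ there exist $p\in(0,1]$ and $\omega_C\in\mathsf{St}_1(\mathrm{A})$ with $\chi=p\,\omega+(1-p)\,\omega_C$.
   Context: $\mathsf{St}_1(\mathrm{A})$ is the set of deterministic (normalized) states of $\mathrm{A}$; $\mathsf{G}_{\mathrm{A}}$ is the group of reversible transformations of $\mathrm{A}$ (a compact group under the standing assumptions). A state $\chi\in\mathsf{St}_1(\mathrm{A})$ is invariant if $\mathcal{U}\chi=\chi$ for all $\mathcal{U}\in\mathsf{G}_{\mathrm{A}}$. *)

From HB Require Import structures.
From mathcomp Require Import all_boot all_order all_algebra.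
From mathcomp Require Import all_classical all_reals all_analysis.
Set Implicit Arguments. Unset Strict Implicit. Unset Printing Implicit Defensive.
Import Order.TTheory GRing.Theory Num.Theory.
Import numFieldNormedType.Exports.
Local Open Scope classical_set_scope.
Local Open Scope ring_scope.

(* Model of system A: the real vector space of states St_R(A) = 'rV[R]_n
   (finite-dimensional), normalized states St1 : set 'rV_n, transformations
   acting linearly by right multiplication  omega |-> omega *m U. *)

Definition convex_states (R : realType) (n : nat) (S : set 'rV[R]_n) : Prop :=
  forall x y, S x -> S y -> forall t : R, 0 <= t -> t <= 1 ->
    S (t *: x + (1 - t) *: y).

Definition state_space (R : realType) (n : nat) (St1 : set 'rV[R]_n) : Prop :=
  [/\ convex_states St1, closed St1 & bounded_set St1].

Definition reversible_group (R : realType) (n : nat) (St1 : set 'rV[R]_n)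
    (G : set 'M[R]_n) : Prop :=
  [/\ G 1%:M,
      (forall U V, G U -> G V -> G (U *m V)),
      (forall U, G U -> U \in unitmx /\ G (invmx U)),
      (forall U w, G U -> St1 w -> St1 (w *m U))
    & compact G].

Definition invariant_state (R : realType) (n : nat) (St1 : set 'rV[R]_n)
    (G : set 'M[R]_n) (chi : 'rV[R]_n) : Prop :=
  St1 chi /\ forall U, G U -> chi *m U = chi.

Definition internal_state (R : realType) (n : nat) (St1 : set 'rV[R]_n)
    (chi : 'rV[R]_n) : Prop :=
  forall omega, St1 omega ->
    exists p : R, [/\ 0 < p, p <= 1 &
      exists omegaC, St1 omegaC /\ chi = p *: omega + (1 - p) *: omegaC].

From HB Require Import structures.
From mathcomp Require Import all_boot all_order all_algebra.
From mathcomp Require Import all_classical all_reals all_analysis.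
From mathcomp Require Import ring lra.
Import Order.TTheory GRing.Theory Num.Theory.
Import numFieldNormedType.Exports.
Local Open Scope classical_set_scope.
Local Open Scope ring_scope.

Set Implicit Arguments.
Unset Strict Implicit.
Unset Printing Implicit Defensive.

(* The convex hull of the orbit {omega U | U in G} is, by Caratheodory, the set
   of convex combinations of n+1 orbit points; it is therefore compact, convex
   and G-stable.  On such a set the point x minimising max_U |x U|^2 is fixed by
   G: otherwise the midpoint of x and x V would do strictly better, by strict
   convexity of |.|^2 and compactness of G.  By uniqueness this fixed point is
   chi, so chi = p omega V + (1 - p) s with p > 0, and applying V^-1 (which
   fixes chi) gives the decomposition. *)

Section MatrixContinuity.
Variables (R : numFieldType) (T : topologicalType).

Lemma continuous_mx m n (f : T -> 'M[R]_(m, n)) :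
  (forall i j, continuous (fun t => f t i j)) -> continuous f.
Proof.
move=> fc x; apply/cvg_ballP => e e0.
have fij (ij : 'I_m * 'I_n) :
    \forall t \near x, ball (f x ij.1 ij.2) e (f t ij.1 ij.2).
  exact: cvg_ball (fc ij.1 ij.2 x) _ e0.
apply: filterS (@filter_forall _ _ _ (nbhs x) (nbhs_filter x) fij) => t ft;
by split=> // i j; exact: ft (i, j).
Qed.

Lemma continuous_mulmx m n p (f : T -> 'M[R]_(m, n)) (g : T -> 'M[R]_(n, p)) :
  continuous f -> continuous g -> continuous (fun t => f t *m g t).
Proof.
move=> fc gc; apply: continuous_mx => i j.
under eq_fun do rewrite mxE.
move=> t; apply: cvg_big => [|k _]; first exact: add_continuous.
have entry m' n' (h : T -> 'M[R]_(m', n')) a b : continuous h ->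
    continuous (fun t => h t a b).
  by move=> hc s; exact: continuous_comp (hc s) (@coord_continuous R _ _ a b _).
by apply: cvgM; [exact: entry fc t|exact: entry gc t].
Qed.

End MatrixContinuity.

Section AffineDependence.
Variables (R : fieldType) (n m : nat).

Lemma affine_dependence (y : 'I_m -> 'rV[R]_n) : (n.+1 < m)%N ->
  exists2 v : 'rV[R]_m, v != 0 &
    \sum_i v 0 i = 0 /\ \sum_i v 0 i *: y i = 0.
Proof.
move=> nm; pose Y := row_mx (\matrix_i y i) (const_mx 1 : 'M[R]_(m, 1)).
have /rowV0Pn [v /sub_kermxP vY v0] : kermx Y != 0.
  rewrite kermx_eq0 /row_free; apply: contraTneq nm => <-.
  by rewrite -leqNgt (leq_trans (rank_leq_col _)) ?addn1.
exists v => //; move: vY; rewrite mul_mx_row -(row_mx0 _ _ n 1).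
case/eq_row_mx => vy /(congr1 (fun u : 'M[R]_1 => u 0 0)); rewrite !mxE => v1.
split.
  by rewrite -[RHS]v1; apply: eq_bigr => i _; rewrite mxE mulr1.
by rewrite -[RHS]vy mulmx_sum_row; apply: eq_bigr => i _; rewrite rowK.
Qed.

End AffineDependence.

Section ConvexCombinations.
Variables (R : realFieldType) (n : nat).
Implicit Types (A : set 'rV[R]_n) (x y a : 'rV[R]_n) (t : R).

Definition mixture (p : 'rV[R]_n * (R * 'rV[R]_n)) : 'rV[R]_n :=
  p.2.1 *: p.1 + (1 - p.2.1) *: p.2.2.

(* [conv_iter A k] is the set of convex combinations of k+1 points of A, built
   one point at a time so that it is a continuous image of compact sets. *)
Fixpoint conv_iter A k : set 'rV[R]_n :=
  if k is k'.+1 then mixture @` (conv_iter A k' `*` (`[0, 1] `*` A)) else A.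

Definition conv_comb A k x := exists (l : 'I_k.+1 -> R) (a : 'I_k.+1 -> 'rV[R]_n),
  [/\ forall i, 0 <= l i, \sum_i l i = 1, forall i, A (a i) &
      x = \sum_i l i *: a i].

Variable A : set 'rV[R]_n.

Lemma conv_iterSP k x : conv_iter A k.+1 x <->
  exists y t a, [/\ conv_iter A k y, 0 <= t <= 1, A a & x = t *: y + (1 - t) *: a].
Proof.
split=> [[[y [t a]] [/= ky]]|[y [t [a [ky t01 Aa ->]]]]].
  by rewrite in_itv /= => -[t01 Aa] <-; exists y, t, a.
by exists (y, (t, a)) => //; split=> //; split=> //=; rewrite in_itv.
Qed.

Lemma conv_iter_nonempty k x : conv_iter A k x -> exists a, A a.
Proof.
case: k => [|k] kx; first by exists x.
by case/conv_iterSP: kx => [y [t [a [_ _ Aa _]]]]; exists a.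
Qed.

Lemma conv_iterS k : conv_iter A k `<=` conv_iter A k.+1.
Proof.
move=> x kx; have [a Aa] := conv_iter_nonempty kx.
apply/conv_iterSP; exists x, 1, a; split=> //; first by rewrite ler01 lexx.
by rewrite subrr scale0r addr0 scale1r.
Qed.

Lemma conv_iter_monotone k l : (k <= l)%N -> conv_iter A k `<=` conv_iter A l.
Proof.
move=> /subnK <-; elim: (l - k)%N => // d IH x /IH.
by rewrite addSn; exact: conv_iterS.
Qed.

Lemma sub_conv_iter k : A `<=` conv_iter A k.
Proof. exact: conv_iter_monotone (leq0n k). Qed.

Lemma conv_iter_mix k l x y t : conv_iter A k x -> conv_iter A l y ->
  0 <= t <= 1 -> conv_iter A (k + l)%N.+1 (t *: x + (1 - t) *: y).
Proof.
move=> kx; elim: l y t => [|l IH] y t ly t01.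
  by rewrite addn0; apply/conv_iterSP; exists x, t, y.
case/conv_iterSP: ly => y' [s [a [ly' /andP[s0 s1] Aa ->]]].
have /andP[t0 t1] := t01.
pose r := t + (1 - t) * s.
have r1 : r <= 1 by rewrite /r; nra.
have tr : t <= r by rewrite /r lerDl mulr_ge0 // subr_ge0.
have tr01 : 0 <= t / r <= 1.
  have [->|r0] := eqVneq r 0; first by rewrite invr0 mulr0 lexx ler01.
  have rp : 0 < r by rewrite lt_neqAle eq_sym r0 (le_trans t0 tr).
  by rewrite divr_ge0 ?(ltW rp) //= ler_pdivrMr // mul1r.
rewrite addnS; apply/conv_iterSP.
exists (t / r *: x + (1 - t / r) *: y'), r, a; split.
- exact: IH.
- by rewrite (le_trans t0 tr) r1.
- exact: Aa.
apply/rowP => i; rewrite !mxE.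
(* if r = 0 then t = s = 0, both sides reduce to a, and t / r = 0 is harmless *)
have [r0|r0] := eqVneq r 0; last by rewrite /r; field.
have [-> ->] : t = 0 /\ s = 0 by move: r0; rewrite /r; split; nra.
by rewrite r0 invr0; ring.
Qed.

Lemma conv_iter_comb k : conv_iter A k `<=` conv_comb A k.
Proof.
elim: k => [|k IH] x /=.
  by move=> Ax; exists (fun=> 1), (fun=> x); rewrite !big_ord1 scale1r.
case/conv_iterSP => y [t [a [/IH [l [b [l0 l1 Ab ->]]] /andP[t0 t1] Aa ->]]].
pose l' i := if unlift ord0 i is Some j then t * l j else 1 - t.
pose b' i := if unlift ord0 i is Some j then b j else a.
exists l', b'; rewrite /l' /b'; split.
- by move=> i; case: unliftP => [j|] _; rewrite ?mulr_ge0 ?subr_ge0.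
- by rewrite big_ord_recl unlift_none; under eq_bigr do rewrite liftK; rewrite -mulr_sumr l1; ring.
- by move=> i; case: unliftP.
rewrite [RHS]big_ord_recl unlift_none addrC scaler_sumr; congr (_ + _).
by apply: eq_bigr => i _; rewrite liftK scalerA.
Qed.

Lemma conv_comb_iter k : conv_comb A k `<=` conv_iter A k.
Proof.
elim: k => [|k IH] x [l [a [l0 l1 Aa ->]]].
  by move: l1; rewrite !big_ord1 => ->; rewrite scale1r.
rewrite big_ord_recl in l1; rewrite big_ord_recl.
set t := \sum_(i < k.+1) l (lift ord0 i) in l1 *.
have lt : l ord0 = 1 - t by rewrite -l1 addrK.
have t0 : 0 <= t by apply: sumr_ge0.
apply/conv_iterSP; have [tz|tn0] := eqVneq t 0.
  exists (a ord0), 0, (a ord0); split; rewrite ?lexx ?ler01 //.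
    exact: sub_conv_iter.
  rewrite big1 => [|i _]; last by rewrite (psumr_eq0P _ tz) ?scale0r.
  by rewrite lt tz !subr0 scale0r !add0r addr0.
have tp : 0 < t by rewrite lt_def tn0.
exists (\sum_(i < k.+1) (l (lift ord0 i) / t) *: a (lift ord0 i)), t, (a ord0).
split; rewrite ?t0 -?lt //=.
- apply: IH; exists (fun i => l (lift ord0 i) / t), (fun i => a (lift ord0 i)).
  by split=> // [i|]; rewrite ?divr_ge0 // -mulr_suml divff.
- by rewrite -l1 lerDr.
rewrite addrC scaler_sumr; congr (_ + _); apply: eq_bigr => i _.
by rewrite scalerA mulrCA divff ?mulr1.
Qed.

Lemma conv_comb_drop k (l : 'I_k.+2 -> R) (a : 'I_k.+2 -> 'rV[R]_n) i0 :
  (forall i, 0 <= l i) -> \sum_i l i = 1 -> (forall i, A (a i)) -> l i0 = 0 ->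
  conv_comb A k (\sum_i l i *: a i).
Proof.
move=> l0 l1 Aa li0; exists (l \o lift i0), (a \o lift i0); split.
- by move=> i; exact: l0.
- by move: l1; rewrite (bigD1_ord i0) //= li0 add0r.
- by move=> i; exact: Aa.
- by rewrite (bigD1_ord i0) //= li0 scale0r add0r.
Qed.

Lemma caratheodory k : (n <= k)%N -> conv_comb A k.+1 `<=` conv_comb A k.
Proof.
move=> nk _ [l [a [l0 l1 Aa ->]]].
have [v v0 [v_sum va_sum]] := @affine_dependence _ _ _ a (nk : (n.+1 < k.+2)%N).
have [i1 v_pos] : exists i, 0 < v 0 i.
  apply/existsP; apply: contraNT v0 => /existsPn v_le0; apply/eqP/rowP => i.
  rewrite mxE; apply/eqP; rewrite -oppr_eq0; apply/eqP.
  apply: (@psumr_eq0P _ _ xpredT (fun j => - v 0 j)) => // [j _|].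
    by rewrite oppr_ge0 leNgt; exact: v_le0.
  by rewrite sumrN v_sum oppr0.
(* move the weights along v until the first one, at index i0, vanishes *)
have [i0 vi0 i0_min] := @arg_minP _ R _ i1 (fun i => 0 < v 0 i) (fun i => l i / v 0 i) v_pos.
pose th := l i0 / v 0 i0.
have th0 : 0 <= th by rewrite divr_ge0 // ltW.
pose mu i := l i - th * v 0 i.
have -> : \sum_i l i *: a i = \sum_i mu i *: a i.
  under [RHS]eq_bigr do rewrite scalerBl -scalerA.
  by rewrite sumrB -scaler_sumr va_sum scaler0 subr0.
apply: (@conv_comb_drop _ mu a i0) => // [i||]; rewrite /mu.
- rewrite subr_ge0; have [vi_pos|vi_le0] := ltrP 0 (v 0 i).
    by rewrite -ler_pdivlMr //; exact: i0_min.
  by rewrite (le_trans _ (l0 i)) // mulr_ge0_le0.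
- by rewrite sumrB l1 -mulr_sumr v_sum mulr0 subr0.
by rewrite /th divfK ?subrr // gt_eqF.
Qed.

Lemma conv_iter_dim k : conv_iter A k `<=` conv_iter A n.
Proof.
elim: k => [|k IH]; first exact: conv_iter_monotone.
have [nk|kn] := leqP n k; last exact: conv_iter_monotone.
by move=> x /conv_iter_comb /(caratheodory nk) /conv_comb_iter /IH.
Qed.

Lemma conv_iter_mulmx_closed (U : 'M[R]_n) k :
  (forall a, A a -> A (a *m U)) -> forall x, conv_iter A k x -> conv_iter A k (x *m U).
Proof.
move=> AU; elim: k => [|k IH] x; first exact: AU.
case/conv_iterSP => y [t [a [ky t01 Aa ->]]]; apply/conv_iterSP.
exists (y *m U), t, (a *m U); split; [exact: IH | by [] | exact: AU |].
by rewrite mulmxDl -!scalemxAl.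
Qed.

Lemma conv_iter_split k x : conv_iter A k x ->
  exists p a s, [/\ 0 < p <= 1, A a, conv_iter A k s & x = p *: a + (1 - p) *: s].
Proof.
elim: k x => [|k IH] x.
  by exists 1, x, x; rewrite ltr01 lexx subrr scale0r addr0 scale1r.
case/conv_iterSP => y [t [a [ky /andP[t0 t1] Aa ->]]].
have [->|t_lt1] := eqVneq t 1.
  have [p [b [s [p01 Ab ks ->]]]] := IH y ky.
  exists p, b, s; split; rewrite ?subrr ?scale0r ?addr0 ?scale1r //.
  exact: conv_iterS.
exists (1 - t), a, y; split.
- by rewrite subr_gt0 lt_neqAle t_lt1 t1 lerBlDr lerDl.
- exact: Aa.
- exact: conv_iterS.
- by rewrite opprB addrCA subrr addr0 addrC.
Qed.

End ConvexCombinations.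

Section ConvexHullTopology.
Variables (R : realType) (n : nat) (A : set 'rV[R]_n).

Lemma conv_iter_convex : convex_states (conv_iter A n).
Proof.
move=> x y nx ny t t0 t1; apply: (@conv_iter_dim _ _ _ (n + n)%N.+1).
by apply: conv_iter_mix; rewrite ?t0.
Qed.

Lemma conv_iter_sub_convex (C : set 'rV[R]_n) k :
  convex_states C -> A `<=` C -> conv_iter A k `<=` C.
Proof.
move=> C_convex AC; elim: k => // k IH x.
by case/conv_iterSP => y [t [a [/IH Cy /andP[t0 t1] /AC Ca ->]]]; exact: C_convex.
Qed.

Lemma mixture_continuous : continuous (@mixture R n).
Proof.
move=> [x [t a]].
have weight_cvg : (fun p : 'rV[R]_n * (R * 'rV[R]_n) => p.2.1) @ (x, (t, a)) --> t.
  exact: (@cvg_comp _ _ _ snd fst _ (nbhs (t, a))) cvg_snd cvg_fst.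
apply: cvgD; apply: cvgZ => //; first exact: cvg_fst.
  by apply: cvgB => //; exact: cvg_cst.
exact: (@cvg_comp _ _ _ snd snd _ (nbhs (t, a))) cvg_snd cvg_snd.
Qed.

Lemma conv_iter_compact k : compact A -> compact (conv_iter A k).
Proof.
move=> A_compact; elim: k => //= k IH.
apply: continuous_compact; first exact/continuous_subspaceT/mixture_continuous.
by apply: compact_setX => //; apply: compact_setX => //; exact: segment_compact.
Qed.

End ConvexHullTopology.

Section SquaredNorm.
Variables (R : realType) (n : nat).
Implicit Types x y : 'rV[R]_n.

Definition sqnorm x : R := \sum_j x 0 j ^+ 2.

Lemma sqnorm_ge0 x : 0 <= sqnorm x.
Proof. by apply: sumr_ge0 => j _; rewrite sqr_ge0. Qed.

Lemma sqnorm_eq0 x : sqnorm x = 0 -> x = 0.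
Proof.
move=> x0; apply/rowP => j; rewrite mxE; apply/eqP; rewrite -sqrf_eq0; apply/eqP.
by apply: (psumr_eq0P _ x0) => // i _; rewrite sqr_ge0.
Qed.

Lemma sqnorm_mix t x y : sqnorm (t *: x + (1 - t) *: y) =
  t * sqnorm x + (1 - t) * sqnorm y - t * (1 - t) * sqnorm (x - y).
Proof.
by rewrite /sqnorm !mulr_sumr -big_split -sumrB; apply: eq_bigr => j _ /=; rewrite !mxE; ring.
Qed.

Lemma sqnorm_continuous : continuous sqnorm.
Proof.
apply: (continuous_big add_continuous) => j _ x.
exact: continuous_comp (@coord_continuous R _ _ 0 j x) (@exprn_continuous R 2 (x 0 j)).
Qed.

End SquaredNorm.

Section FixedPoint.
Variables (R : realType) (n : nat) (G : set 'M[R]_n).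
Hypotheses (G0 : G !=set0) (G_compact : compact G)
  (G_unit : forall U, G U -> U \in unitmx)
  (G_mul : forall U V, G U -> G V -> G (U *m V)).

Definition orbit_bound (x : 'rV[R]_n) (s : R) := forall U, G U -> sqnorm (x *m U) <= s.

Lemma sqnorm_mulmx_continuous (x : 'rV[R]_n) :
  continuous (fun U : 'M[R]_n => sqnorm (x *m U)).
Proof.
have xU : continuous (fun U : 'M[R]_n => x *m U).
  by apply: continuous_mulmx => [|V]; [exact: cst_continuous | exact: cvg_id].
by move=> U; exact: continuous_comp (xU U) (@sqnorm_continuous _ _ _).
Qed.

Lemma orbit_sqnorm_gap z : z != 0 ->
  exists2 d, 0 < d & forall U, G U -> d <= sqnorm (z *m U).
Proof.
move=> z0; have [U0 /set_mem GU0 U0_min] := compact_EVT_min G0 G_compact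
  (continuous_subspaceT (sqnorm_mulmx_continuous (x := z))).
exists (sqnorm (z *m U0)) => [|U GU]; last exact/U0_min/mem_set.
rewrite lt_def sqnorm_ge0 andbT; apply: contra_neq z0 => /sqnorm_eq0 zU0.
by rewrite -(mulmxK (G_unit GU0) z) zU0 mul0mx.
Qed.

Lemma orbit_bound_mulmx V x s : G V -> orbit_bound x s -> orbit_bound (x *m V) s.
Proof. by move=> GV xs U GU; rewrite -mulmxA; apply/xs/G_mul. Qed.

Lemma orbit_bound_midpoint x y s d : orbit_bound x s -> orbit_bound y s ->
  (forall U, G U -> d <= sqnorm ((x - y) *m U)) ->
  orbit_bound (2^-1 *: x + (1 - 2^-1) *: y) (s - d / 4).
Proof.
move=> xs ys d_le U GU; rewrite mulmxDl -!scalemxAl sqnorm_mix -mulmxBl.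
have := xs U GU; have := ys U GU; have := d_le U GU; lra.
Qed.

Variable K : set 'rV[R]_n.
Hypotheses (K0 : K !=set0) (K_compact : compact K) (K_convex : convex_states K)
  (K_stable : forall U x, G U -> K x -> K (x *m U)).

Lemma exists_min_orbit_bound : exists x s,
  [/\ K x, orbit_bound x s & forall y s', K y -> orbit_bound y s' -> s <= s'].
Proof.
have [x0 Kx0] := K0.
have [U0 /set_mem GU0 U0_max] := compact_EVT_max G0 G_compact
  (continuous_subspaceT (sqnorm_mulmx_continuous (x := x0))).
set s0 := sqnorm (x0 *m U0).
(* minimise s over the compact epigraph {(x, s) | K x, 0 <= s <= s0, orbit_bound x s} with
   s0 = max_U |x0 U|^2, which keeps it nonempty and bounded *)
pose gap (U : 'M[R]_n) (p : 'rV[R]_n * R) := p.2 - sqnorm (p.1 *m U).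
have gap_continuous U : continuous (gap U).
  have pU : continuous (fun p : 'rV[R]_n * R => p.1 *m U).
    by apply: continuous_mulmx => [[q r]|]; [exact: cvg_fst | exact: cst_continuous].
  move=> p; apply: cvgB; first exact: cvg_snd.
  exact: continuous_comp (pU p) (@sqnorm_continuous _ _ _).
pose P := (K `*` `[0, s0]) `&` \bigcap_(U in G) (gap U @^-1` [set r | 0 <= r]).
have P_compact : compact P.
  apply: compact_closedI; first by apply: compact_setX => //; exact: segment_compact.
  apply: closed_bigI => U _; apply: preimage_closed; last exact: closed_ge.
  by move=> p _; exact: gap_continuous.
have P0 : P !=set0.
  exists (x0, s0); split; first by split=> //=; rewrite in_itv /= lexx sqnorm_ge0.
  by move=> U GU /=; rewrite /gap subr_ge0; apply/U0_max/mem_set.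
have [[x s] /set_mem [[Kx /= s_itv] x_bound] s_min] := compact_EVT_min P0 P_compact
  (continuous_subspaceT (fun p => @cvg_snd _ _ (nbhs p.1) (nbhs p.2) _)).
have xs : orbit_bound x s by move=> U /x_bound; rewrite /gap /= subr_ge0.
exists x, s; split=> // y s' Ky ys'.
have [s0s'|s's0] := leP s0 s'.
  by move: s_itv; rewrite in_itv => /andP[_ /le_trans]; apply.
have [U GU] := G0.
apply: (s_min (y, s')); apply: mem_set; split; first split=> //=.
  by rewrite in_itv /= (le_trans (sqnorm_ge0 _) (ys' U GU)) ltW.
by move=> V GV /=; rewrite /gap subr_ge0; exact: ys'.
Qed.

Theorem compact_convex_fixed_point : exists2 x, K x & forall U, G U -> x *m U = x.
Proof.
have [x [s [Kx xs s_min]]] := exists_min_orbit_bound.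
exists x => // V GV; apply/eqP; apply: contraT => xV_neq.
have xV0 : x - x *m V != 0 by rewrite subr_eq0 eq_sym.
have [d d_pos d_le] := orbit_sqnorm_gap xV0.
have m_bound := orbit_bound_midpoint xs (orbit_bound_mulmx GV xs) d_le.
have Km : K (2^-1 *: x + (1 - 2^-1) *: (x *m V)).
  by apply: K_convex => //; [exact: K_stable | rewrite invf_le1 ?ler1n].
have := s_min _ _ Km m_bound; have : 0 < d / 4 by rewrite divr_gt0.
lra.
Qed.

End FixedPoint.

Theorem mainTheorem11 (R : realType) (n : nat) (St1 : set 'rV[R]_n)
    (G : set 'M[R]_n) (chi : 'rV[R]_n) :
  state_space St1 ->
  reversible_group St1 G ->
  invariant_state St1 G chi ->
  (forall psi, invariant_state St1 G psi -> psi = chi) ->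
  internal_state St1 chi.
Proof.
move=> [St1_convex _ _] [G1 G_mul G_inv G_St1 G_compact] _ chi_unique omega St1_omega.
pose orbit := [set omega *m U | U in G].
have orbit_compact : compact orbit.
  apply/continuous_compact/G_compact/continuous_subspaceT.
  by apply: continuous_mulmx => [|U]; [exact: cst_continuous | exact: cvg_id].
have orbit_stable U a : G U -> orbit a -> orbit (a *m U).
  by move=> GU [V GV <-]; exists (V *m U); [exact: G_mul | rewrite mulmxA].
have hull_St1 : conv_iter orbit n `<=` St1.
  by apply: conv_iter_sub_convex => // _ [U GU <-]; exact: G_St1.
have [x hull_x x_fixed] : exists2 x, conv_iter orbit n x & forall U, G U -> x *m U = x.
  apply: compact_convex_fixed_point => //.
  - by exists 1%:M.
  - by move=> U /G_inv[].
  - by exists omega; apply: sub_conv_iter; exists 1%:M; rewrite ?mulmx1.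
  - exact: conv_iter_compact.
  - exact: conv_iter_convex.
  - by move=> U y GU; apply: conv_iter_mulmx_closed => a; exact: orbit_stable.
have -> : chi = x by symmetry; apply: chi_unique; split=> //; exact: hull_St1.
have [p [_ [s [/andP[p0 p1] [V GV <-] hull_s x_eq]]]] := conv_iter_split hull_x.
have [V_unit G_invV] := G_inv V GV.
exists p; split=> //; exists (s *m invmx V); split; first exact/G_St1/hull_St1.
by rewrite -(x_fixed _ G_invV) x_eq mulmxDl -!scalemxAl mulmxK.
Qed.
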